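(* If $\sum_{n=1}^N r_n \le C_{min}$, then every packet $p^{g,j}$ of the aggregate flow has delay $d^{g,j}-a^{g,j} \le \frac{\sum_{n}\sigma_n}{C_{min}}$.
   Context: A multiclass FIFO system serves packets from $N$ classes. Class $n$ has constant service rate $C_n>0$; $C_{min}=\min_n C_n$. The aggregate flow consists of all packets $p^{g,1},p^{g,2},\dots$ in order of arrival (ties broken arbitrarily), with arrival times $0\le a^{g,1}\le a^{g,2}\le\cdots$, lengths $l^{g,j}>0$, and departure times $d^{g,j}=\max\{a^{g,j},d^{g,j-1}\}+l^{g,j}/C_{c(j)}$, $d^{g,0}=0$, $c(j)$ the class of $p^{g,j}$. $A_n(s,t)$ denotes the total length of class-$n$ packets arriving in $[s,t]$. Each class $n$ is leaky-bucket constrained: $A_n(s,t)\le r_n(t-s)+\sigma_n$ for all $0\le s\le t$, with constants $r_n,\sigma_n\ge 0$. *)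

From Stdlib Require Import Reals Lra Arith.
Open Scope R_scope.

Fixpoint sum_lt (f : nat -> R) (n : nat) : R :=
  match n with
  | O => 0
  | S k => sum_lt f k + f k
  end.

Fixpoint min_upto (C : nat -> R) (k : nat) : R :=
  match k with
  | O => C O
  | S k' => Rmin (min_upto C k') (C (S k'))
  end.

(* C_min = min over the classes 0..N-1 (N >= 1 assumed where used) *)
Definition Cmin (N : nat) (C : nat -> R) : R := min_upto C (N - 1).

(* Departure times of the aggregate FIFO flow; packets are indexed 1,2,...,
   d 0 = 0, d j = max(a j, d (j-1)) + l j / C (c j). *)
Fixpoint dep (C : nat -> R) (c : nat -> nat) (a l : nat -> R) (j : nat) : R :=
  match j with
  | O => 0
  | S k => Rmax (a (S k)) (dep C c a l k) + l (S k) / C (c (S k))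
  end.

(* Total length of class-n packets among p^{g,1..M} arriving in [s,t].
   A_n(s,t) is the supremum over M of these partial sums. *)
Definition arr_upto (c : nat -> nat) (a l : nat -> R) (n : nat) (s t : R)
  (M : nat) : R :=
  sum_lt (fun i =>
    if Nat.eq_dec (c (S i)) n then
      if Rle_dec s (a (S i)) then
        if Rle_dec (a (S i)) t then l (S i) else 0
      else 0
    else 0) M.

(* Let m = C_min. The proof is a busy-period argument.
   1. Busy period: for every packet j there is an earlier packet k <= j
      (the one opening the busy period that contains j) such that the
      server, which works at rate at least m, has spent the time
      d_j - a_k serving packets k..j only:
        m (d_j - a_k) <= l_k + ... + l_j.
      This follows by induction on j from the FIFO recursion, resetting k
      to j whenever the server is idle when packet j arrives.
   2. Packets k..j all arrive in [a_k, a_j], so their total length is at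
      most the sum over classes of the arrivals A_n(a_k, a_j), hence at
      most (sum r_n)(a_j - a_k) + sum sigma_n by the leaky buckets.
   3. Combining with sum r_n <= m and a_k <= a_j yields
      m (d_j - a_j) <= sum sigma_n. *)

From Stdlib Require Import Reals Lra Lia.
Open Scope R_scope.

Lemma sum_lt_le (f g : nat -> R) (M : nat) :
  (forall i, (i < M)%nat -> f i <= g i) -> sum_lt f M <= sum_lt g M.
Proof.
  induction M as [|M IH]; simpl; intros Hfg; [lra|].
  assert (sum_lt f M <= sum_lt g M) by (apply IH; intros; apply Hfg; lia).
  assert (f M <= g M) by (apply Hfg; lia).
  lra.
Qed.

Lemma sum_lt_nonneg (f : nat -> R) (M : nat) :
  (forall i, (i < M)%nat -> 0 <= f i) -> 0 <= sum_lt f M.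
Proof.
  induction M as [|M IH]; simpl; intros Hf; [lra|].
  assert (0 <= sum_lt f M) by (apply IH; intros; apply Hf; lia).
  assert (0 <= f M) by (apply Hf; lia).
  lra.
Qed.

Lemma sum_lt_plus (f g : nat -> R) (M : nat) :
  sum_lt (fun i => f i + g i) M = sum_lt f M + sum_lt g M.
Proof. induction M as [|M IH]; simpl; [lra|]. rewrite IH; lra. Qed.

Lemma sum_lt_affine (r s : nat -> R) (t : R) (M : nat) :
  sum_lt (fun n => r n * t + s n) M = sum_lt r M * t + sum_lt s M.
Proof. induction M as [|M IH]; simpl; [lra|]. rewrite IH; lra. Qed.

Lemma sum_lt_swap (F : nat -> nat -> R) (N M : nat) :
  sum_lt (fun i => sum_lt (fun n => F n i) N) M =
  sum_lt (fun n => sum_lt (F n) M) N.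
Proof.
  induction M as [|M IH]; simpl.
  - induction N as [|N IHN]; simpl; [reflexivity|]. rewrite <- IHN; lra.
  - rewrite IH, <- sum_lt_plus. reflexivity.
Qed.

Lemma sum_lt_single (m : nat) (x : R) (N : nat) :
  (m < N)%nat -> sum_lt (fun n => if Nat.eq_dec m n then x else 0) N = x.
Proof.
  assert (Hbelow : forall K, (K <= m)%nat ->
            sum_lt (fun n => if Nat.eq_dec m n then x else 0) K = 0).
  { induction K as [|K IH]; intros HK; simpl; [reflexivity|].
    rewrite IH by lia. destruct (Nat.eq_dec m K); [lia|lra]. }
  induction N as [|N IH]; intros HmN; simpl; [lia|].
  destruct (Nat.eq_dec m N) as [<-|Hne].
  - rewrite Hbelow by lia. lra.
  - rewrite IH by lia. lra.
Qed.

Lemma min_upto_le (C : nat -> R) (k n : nat) :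
  (n <= k)%nat -> min_upto C k <= C n.
Proof.
  induction k as [|k IH]; intros Hn; simpl.
  - replace n with 0%nat by lia. lra.
  - destruct (Nat.eq_dec n (S k)) as [->|Hne].
    + apply Rmin_r.
    + eapply Rle_trans; [apply Rmin_l|]. apply IH; lia.
Qed.

Lemma min_upto_pos (C : nat -> R) (k : nat) :
  (forall n, (n <= k)%nat -> 0 < C n) -> 0 < min_upto C k.
Proof.
  induction k as [|k IH]; intros HC; simpl.
  - apply HC; lia.
  - apply Rmin_glb_lt; [apply IH; intros; apply HC|apply HC]; lia.
Qed.

Lemma service_time_bound (m C x : R) :
  0 < m -> m <= C -> 0 <= x -> m * (x / C) <= x.
Proof.
  intros Hm HmC Hx.
  replace (m * (x / C)) with (x * (m / C)) by (field; lra).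
  rewrite <- (Rmult_1_r x) at 2.
  apply Rmult_le_compat_l; [exact Hx|].
  apply (Rmult_le_reg_r C); [lra|].
  replace (m / C * C) with m by (field; lra). lra.
Qed.

Lemma arrivals_monotone (a : nat -> R) :
  (forall j, (1 <= j)%nat -> a j <= a (S j)) ->
  forall k j, (1 <= k)%nat -> (k <= j)%nat -> a k <= a j.
Proof.
  intros Hmono k j Hk Hkj. induction j as [|j IH]; [lia|].
  destruct (Nat.eq_dec k (S j)) as [->|Hne]; [lra|].
  eapply Rle_trans; [apply IH; lia|]. apply Hmono; lia.
Qed.

Definition work_since (l : nat -> R) (k j : nat) : R :=
  sum_lt (fun i => if Compare_dec.le_dec k (S i) then l (S i) else 0) j.

Lemma work_since_before (l : nat -> R) (k j : nat) :
  (j < k)%nat -> work_since l k j = 0.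
Proof.
  unfold work_since. induction j as [|j IH]; intros Hjk; simpl; [reflexivity|].
  rewrite IH by lia. destruct (Compare_dec.le_dec k (S j)); [lia|lra].
Qed.

Lemma work_since_S (l : nat -> R) (k j : nat) :
  (k <= S j)%nat -> work_since l k (S j) = work_since l k j + l (S j).
Proof.
  intros Hk. unfold work_since at 1. simpl. fold (work_since l k j).
  destruct (Compare_dec.le_dec k (S j)); [reflexivity|lia].
Qed.

Lemma busy_period_start (C : nat -> R) (c : nat -> nat) (a l : nat -> R) (m : R) :
  0 <= a 1%nat ->
  (forall i, (1 <= i)%nat -> m * (l i / C (c i)) <= l i) ->
  forall j, (1 <= j)%nat -> exists k, (1 <= k <= j)%nat /\
    m * (dep C c a l j - a k) <= work_since l k j.
Proof.
  intros Ha1 Hservice j Hj.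
  induction j as [|j IH]; [lia|].
  assert (Hlast := Hservice (S j) ltac:(lia)).
  simpl dep.
  destruct (Rle_dec (dep C c a l j) (a (S j))) as [Hidle|Hbusy].
  - (* the server is idle when packet j+1 arrives: a new busy period *)
    exists (S j). split; [lia|].
    rewrite Rmax_left, work_since_S, work_since_before by lia || lra.
    lra.
  - (* packet j+1 joins the current busy period *)
    assert (Hj0 : j <> 0%nat) by (intros ->; simpl in Hbusy; lra).
    destruct (IH ltac:(lia)) as [k [Hk Hwork]].
    exists k. split; [lia|].
    rewrite Rmax_right, work_since_S by lia || lra.
    lra.
Qed.

(* Step 2: the packets k..j all arrive in [a_k, a_j], so their total length
   is bounded by the arrivals of all N classes in that interval. *)
Lemma work_since_le_arrivals (N : nat) (c : nat -> nat) (a l : nat -> R) (k j : nat) :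
  (forall i, (1 <= i)%nat -> (c i < N)%nat) ->
  (forall i, (1 <= i)%nat -> a i <= a (S i)) ->
  (forall i, (1 <= i)%nat -> 0 <= l i) ->
  (1 <= k)%nat -> (k <= j)%nat ->
  work_since l k j <= sum_lt (fun n => arr_upto c a l n (a k) (a j) j) N.
Proof.
  intros Hclass Hmono Hl Hk Hkj.
  assert (Hle := arrivals_monotone a Hmono).
  unfold arr_upto, work_since. rewrite <- sum_lt_swap.
  apply sum_lt_le. intros i Hi.
  rewrite sum_lt_single by (apply Hclass; lia).
  destruct (Compare_dec.le_dec k (S i)) as [Hki|Hki].
  - destruct (Rle_dec (a k) (a (S i))) as [_|Hn]; [|exfalso; apply Hn, Hle; lia].
    destruct (Rle_dec (a (S i)) (a j)) as [_|Hn]; [lra|exfalso; apply Hn, Hle; lia].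
  - assert (0 <= l (S i)) by (apply Hl; lia).
    destruct Rle_dec; [destruct Rle_dec|]; lra.
Qed.

Theorem corollary1
  (N : nat) (C r sigma : nat -> R) (c : nat -> nat) (a l : nat -> R)
  (HN : (1 <= N)%nat)
  (HC : forall n, (n < N)%nat -> 0 < C n)
  (Hr : forall n, (n < N)%nat -> 0 <= r n)
  (Hsig : forall n, (n < N)%nat -> 0 <= sigma n)
  (Hclass : forall j, (1 <= j)%nat -> (c j < N)%nat)
  (Ha0 : 0 <= a 1%nat)
  (Hmono : forall j, (1 <= j)%nat -> a j <= a (S j))
  (Hl : forall j, (1 <= j)%nat -> 0 < l j)
  (Hlb : forall n, (n < N)%nat -> forall s t, 0 <= s -> s <= t ->
           forall M, arr_upto c a l n s t M <= r n * (t - s) + sigma n)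
  (Hrate : sum_lt r N <= Cmin N C) :
  forall j, (1 <= j)%nat ->
    dep C c a l j - a j <= sum_lt sigma N / Cmin N C.
Proof.
  intros j Hj. unfold Cmin in *. set (m := min_upto C (N - 1)) in *.
  assert (Hm : 0 < m) by (apply min_upto_pos; intros; apply HC; lia).
  assert (Hl0 : forall i, (1 <= i)%nat -> 0 <= l i) by (intros; left; auto).
  assert (Hservice : forall i, (1 <= i)%nat -> m * (l i / C (c i)) <= l i).
  { intros i Hi. apply service_time_bound; auto.
    apply min_upto_le. specialize (Hclass i Hi). lia. }
  destruct (busy_period_start C c a l m Ha0 Hservice j Hj) as [k [Hk Hbusy]].
  assert (Hak0 : 0 <= a k).
  { apply (Rle_trans _ (a 1%nat)); [exact Ha0|].
    apply (arrivals_monotone a Hmono); lia. }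
  assert (Hakj : a k <= a j) by (apply (arrivals_monotone a Hmono); lia).
  assert (Hwork := work_since_le_arrivals N c a l k j Hclass Hmono Hl0 ltac:(lia) ltac:(lia)).
  assert (Hbucket : sum_lt (fun n => arr_upto c a l n (a k) (a j) j) N <=
                    sum_lt r N * (a j - a k) + sum_lt sigma N).
  { rewrite <- sum_lt_affine. apply sum_lt_le. intros n Hn. apply Hlb; assumption. }
  assert (0 <= sum_lt r N) by (apply sum_lt_nonneg; auto).
  assert (Hfinal : m * (dep C c a l j - a j) <= sum_lt sigma N) by nra.
  apply (Rmult_le_reg_l m); [exact Hm|].
  replace (m * (sum_lt sigma N / m)) with (sum_lt sigma N) by (field; lra).
  exact Hfinal.
Qed.
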